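(* Let $G$ be a flag with vertices $v_1,\dots,v_n$ ordered by increasing $x$-coordinate, and let $v_iv_j$ ($i<j$) be a separating edge. Then no edge of $G[V^+(v_iv_j)]$ intersects an edge of $G[V^-(v_iv_j)]$. Furthermore, if $e$ is an edge of $G[V^+(v_iv_j)]$ and $f$ is an edge of $G[V^-(v_iv_j)]$, then $e$ and $f$ are related and $f\prec e$.
   Context: Let $\mathcal C=S^1\times\mathbb R$ ($S^1=[0,1]$ with $0\sim1$), points $p=(p_x,p_y)$ with $0\le p_x<1$. A flag is a graph drawn on $\mathcal C$ (vertices distinct points, edges Jordan arcs, no overlapping edges, no edge through a vertex) that is complete, simple (any two edges meet in at most one point: a common endpoint or a proper crossing), monotone (every edge meets each vertical line $l_{x=a}=\{p:p_x=a\}$ at most once, no two vertices share an $x$-coordinate, no vertex has $x$-coordinate $0$), and such that $l_{x=0}$ meets every edge in its relative interior. A point $v$ is related to an $x$-monotone curve $e$ if $l_{x=v_x}$ meets $e$ in its relative interior; then $v$ is below (above) $e$ if $v_y$ is smaller (larger) than the $y$-coordinate of $l_{x=v_x}\cap e$. Two $x$-monotone curves $e,f$ are related if they do not cross, some vertical line meets both relative interiors, and all such lines meet them in the same vertical order; then $e\prec f$ means that on every vertical line meeting both relative interiors, $e$'s point has $y$-coordinate at most that of $f$'s point. For $i<j$, $V^+(v_iv_j)=\{v_s: s>j,\ v_s \text{ above } v_iv_j\}$ and $V^-(v_iv_j)=\{v_s: s>j,\ v_s \text{ below } v_iv_j\}$. The edge $v_iv_j$ is separating if $|V^+(v_iv_j)|>1$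 and $|V^-(v_iv_j)|>1$. For a vertex set $U$, $G[U]$ is the induced subgraph. *)

From HB Require Import structures.
From mathcomp Require Import all_boot all_order all_algebra.
From mathcomp Require Import all_classical all_reals all_analysis.
Set Implicit Arguments. Unset Strict Implicit. Unset Printing Implicit Defensive.
Import Order.TTheory GRing.Theory Num.Theory.
Import numFieldNormedType.Exports.
Local Open Scope ring_scope.
Local Open Scope classical_set_scope.

(* Encoding of a flag:
   - the cylinder S^1 x R has points (a, b) with 0 <= a < 1;
   - vertex v_i (i : 'I_n) is the point (x i, y i); vertices are indexed by
     increasing x-coordinate (hypothesis of the theorem);
   - for i < j, the edge v_i v_j is an x-monotone arc crossing l_{x=0} in its
     relative interior; its x-projection is therefore the circular arc from
     x j through 0 to x i.  We describe it by its "unrolled" parametrisation: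
     a function c i j, continuous on [x j, 1 + x i], whose graph point at
     parameter t is the cylinder point (frac t, c i j t). *)

Definition frac {R : realType} (t : R) : R := t - (Num.floor t)%:~R.

Section Defs.
Context {R : realType} {n : nat}.
Implicit Types (x y : 'I_n -> R) (c : 'I_n -> 'I_n -> R -> R).

Definition edom x (i j : 'I_n) (t : R) : bool := (x j <= t) && (t <= 1 + x i).
Definition eint x (i j : 'I_n) (t : R) : bool := (x j < t) && (t < 1 + x i).

Definition meet_at x c (i j k l : 'I_n) (s t : R) : Prop :=
  [/\ edom x i j s, edom x k l t, frac s = frac t & c i j s = c k l t].

Definition proper_crossing x c (i j k l : 'I_n) (s t : R) : Prop :=
  [/\ eint x i j s, eint x k l t, frac s = frac t, c i j s = c k l t &
    exists2 d : R, 0 < d & forall e : R, 0 < e < d ->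
      (c i j (s - e) - c k l (t - e)) * (c i j (s + e) - c k l (t + e)) < 0].

Definition is_flag x y c : Prop :=
  [/\ (forall i, 0 < x i < 1),
      (forall i j : 'I_n, i <> j -> x i <> x j),
      (forall i j : 'I_n, (i < j)%N ->
         [/\ {within [set t : R | edom x i j t], continuous (c i j : R -> R)},
             c i j (x j) = y j & c i j (1 + x i) = y i]),
      (forall i j k : 'I_n, (i < j)%N -> k <> i -> k <> j ->
         forall t, edom x i j t -> frac t = x k -> c i j t <> y k) &
      (forall i j k l : 'I_n, (i < j)%N -> (k < l)%N -> (i, j) <> (k, l) ->
         (forall s t s' t', meet_at x c i j k l s t -> meet_at x c i j k l s' t' ->
             frac s = frac s' /\ c i j s = c i j s') /\
         (forall s t, meet_at x c i j k l s t ->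
             (exists m : 'I_n, [/\ m = i \/ m = j, m = k \/ m = l,
                                   frac s = x m & c i j s = y m])
             \/ proper_crossing x c i j k l s t))].

Definition Vplus x y c (i j : 'I_n) : {set 'I_n} :=
  [set s : 'I_n | (j < s)%N &&
     `[< exists t, [/\ eint x i j t, frac t = x s & c i j t < y s] >]].
Definition Vminus x y c (i j : 'I_n) : {set 'I_n} :=
  [set s : 'I_n | (j < s)%N &&
     `[< exists t, [/\ eint x i j t, frac t = x s & y s < c i j t] >]].

Definition separating x y c (i j : 'I_n) : Prop :=
  (1 < #|Vplus x y c i j|)%N /\ (1 < #|Vminus x y c i j|)%N.

Definition common_line x (i j k l : 'I_n) (s t : R) : Prop :=
  [/\ eint x i j s, eint x k l t & frac s = frac t].

Definition prec x c (i j k l : 'I_n) : Prop :=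
  forall s t, common_line x i j k l s t -> c i j s <= c k l t.

Definition related x c (i j k l : 'I_n) : Prop :=
  [/\ ~ (exists s t, proper_crossing x c i j k l s t),
      (exists s t, common_line x i j k l s t) &
      prec x c i j k l \/ prec x c k l i j].

End Defs.

(* Let v_k, v_l lie above v_iv_j and v_r below it, all three right of v_j.
   Then v_kv_l passes above v_r.  Right of v_l, a violation would make v_kv_l
   meet v_iv_j there; but then v_kv_l passes above v_j, hence above the edge
   v_jv_l, which in turn lies above v_iv_j.  Left of v_k, a violation would
   force v_kv_l below v_j and then across v_jv_r twice.  Reflecting in the
   x-axis, v_k and v_l lie above every edge v_pv_q of G[V^-].  Finally, two
   vertex-disjoint edges, each on the correct side of the endpoints of the
   other, are ordered on their whole common x-range: there their difference is
   negative at both ends, vanishes at most once by simplicity, and changes sign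
   at each zero since such a meeting must be a proper crossing. *)

From Pilot Require Import Defs.
From HB Require Import structures.
From mathcomp Require Import all_boot all_order all_algebra.
From mathcomp Require Import all_classical all_reals all_analysis.
From mathcomp Require Import ring lra.
Import Order.TTheory GRing.Theory Num.Theory.
Import numFieldNormedType.Exports.
Local Open Scope ring_scope.
Local Open Scope classical_set_scope.
Local Notation frac := Defs.frac.

Section RealFacts.
Context {R : realType}.

Lemma frac_id (t : R) : 0 <= t < 1 -> frac t = t.
Proof.
by move=> t01; rewrite /frac (@floor_def _ _ 0) ?subr0 //= add0r.
Qed.

Lemma frac1D (t : R) : frac (1 + t) = frac t.
Proof. by rewrite /frac [1 + t]addrC floorDrz ?intr_int // floor1 intrD; ring. Qed.

Lemma frac_lt2 {t : R} : 0 < t < 2 ->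
  (t < 1 /\ frac t = t) \/ (1 <= t /\ frac t = t - 1).
Proof.
move=> t02; have [t1|t1] := ltP t 1; first by left; rewrite frac_id //; lra.
by right; rewrite -[in frac t](subrKC 1 t) frac1D frac_id //; lra.
Qed.

Lemma frac_inj (s t : R) : 0 < s < 2 -> 0 < t < 2 -> s <= t < s + 1 ->
  frac s = frac t -> s = t.
Proof. by move=> /frac_lt2[[? ->]|[? ->]] /frac_lt2[[? ->]|[? ->]]; lra. Qed.

Lemma eq_fracD (s t h : R) : 0 < s < 2 -> 0 < t < 2 ->
  0 < s + h < 2 -> 0 < t + h < 2 -> frac s = frac t -> frac (s + h) = frac (t + h).
Proof.
move=> s02 t02 sh02 th02.
by case: (frac_lt2 s02) (frac_lt2 t02) (frac_lt2 sh02) (frac_lt2 th02)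
  => -[? ->] [[? ->]|[? ->]] [[? ->]|[? ->]] [[? ->]|[? ->]]; lra.
Qed.

Lemma continuous_within_shift {f : R -> R} {A B : set R} {d : R} :
  {within B, continuous f} -> (forall h, A h -> B (d + h)) ->
  {within A, continuous (fun h => f (d + h))}.
Proof.
move=> /subspace_continuousP cf AB; apply/subspace_continuousP => h Ah.
have shift : (fun h' => d + h') @ within A (nbhs h) --> within B (nbhs (d + h)).
  move=> P; rewrite /within /= => BP.
  have : (fun h' : R => d + h') @ nbhs h --> nbhs (d + h).
    by apply: cvgD; [exact: cvg_cst | exact: cvg_id].
  move=> /(_ _ BP); rewrite /= nbhs_simpl /=.
  by apply: filterS => h' Bh' Ah'; exact: Bh' (AB h' Ah').
exact: (cvg_comp _ _ shift (cf _ (AB h Ah))).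
Qed.

Lemma IVT_mul_le0 {G : R -> R} {u v : R} : u <= v ->
  {within `[u, v], continuous G} -> G u * G v <= 0 ->
  exists2 z, u <= z <= v & G z = 0.
Proof.
move=> uv cG GuGv; have [|z] := @IVT R G u v 0 uv cG.
  rewrite ge_min le_max; apply/andP; split; apply/orP.
    by have [|?] := leP (G u) 0; [left | right; nra].
  by have [|?] := leP 0 (G u); [left | right; nra].
by rewrite in_itv /=; exists z.
Qed.

Lemma not_gt0_of_single_zero {G : R -> R} {a b : R} :
  {within `[a, b], continuous G} -> G a < 0 -> G b < 0 ->
  (forall u v, a <= u <= b -> a <= v <= b -> G u = 0 -> G v = 0 -> u = v) ->
  forall h, a <= h <= b -> ~ 0 < G h.
Proof.
move=> cG Ga Gb zero_uniq h hab Gh.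
have sub u v : a <= u -> v <= b -> {within `[u, v], continuous G}.
  move=> au vb; apply: continuous_subspaceW cG => w /=; rewrite !in_itv /=; lra.
have [z1 z1ah Gz1] : exists2 z, a <= z <= h & G z = 0.
  by apply: IVT_mul_le0 => //; [lra | apply: sub; lra | nra].
have [z2 z2hb Gz2] : exists2 z, h <= z <= b & G z = 0.
  by apply: IVT_mul_le0 => //; [lra | apply: sub; lra | nra].
have z12 : z1 = z2 by apply: zero_uniq => //; lra.
have [z1h|z1h] := eqVneq z1 h; first by move: Gz1; rewrite z1h; lra.
by move: z1h z2hb; rewrite z12 => /eqP; lra.
Qed.

(* A sign change at an interior zero produces a positive value, and by the
   intermediate value theorem a positive value produces two zeros. *)
Lemma lt0_of_single_crossing {G : R -> R} {a b : R} :
  {within `[a, b], continuous G} -> G a < 0 -> G b < 0 ->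
  (forall u v, a <= u <= b -> a <= v <= b -> G u = 0 -> G v = 0 -> u = v) ->
  (forall z, a < z < b -> G z = 0 ->
     exists2 d, 0 < d & forall e, 0 < e < d -> G (z - e) * G (z + e) < 0) ->
  forall h, a <= h <= b -> G h < 0.
Proof.
move=> cG Ga Gb zero_uniq crossing h hab.
have not_gt0 := not_gt0_of_single_zero cG Ga Gb zero_uniq.
have [//|Gh|Gh] := ltgtP (G h) 0; first by case: (not_gt0 h hab).
have hab' : a < h < b.
  have ha : a != h by apply/eqP => ah; move: Ga; rewrite ah Gh ltxx.
  have hb : h != b by apply/eqP => hb; move: Gb; rewrite -hb Gh ltxx.
  by move: hab; rewrite !lt_neqAle ha hb.
have [d d0 Hd] := crossing h hab' Gh.
pose m := Num.min d (Num.min (h - a) (b - h)).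
have [md mha mbh] : [/\ m <= d, m <= h - a & m <= b - h].
  by split; rewrite /m !ge_min !lexx ?orbT.
have m0 : 0 < m by rewrite /m !lt_min d0; lra.
pose e := m / 2.
have e_lt : 0 < e < d /\ e < h - a /\ e < b - h by rewrite /e; lra.
have Gl : G (h - e) <= 0 by rewrite leNgt; apply/negP; apply: not_gt0; lra.
have Gr : G (h + e) <= 0 by rewrite leNgt; apply/negP; apply: not_gt0; lra.
have := Hd e (proj1 e_lt); nra.
Qed.

End RealFacts.

Definition vertex_below {R : realType} {n : nat} (x y : 'I_n -> R)
    (c : 'I_n -> 'I_n -> R -> R) (r a b : 'I_n) : Prop :=
  forall t, edom x a b t -> frac t = x r -> y r < c a b t.

Definition vertex_above {R : realType} {n : nat} (x y : 'I_n -> R)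
    (c : 'I_n -> 'I_n -> R -> R) (r a b : 'I_n) : Prop :=
  forall t, edom x a b t -> frac t = x r -> c a b t < y r.

Section Flag.
Context {R : realType} {n : nat} {x y : 'I_n -> R} {c : 'I_n -> 'I_n -> R -> R}.
Hypothesis x_incr : forall a b : 'I_n, (a < b)%N -> x a < x b.
Hypothesis flag : is_flag x y c.

Lemma x_gt0 (a : 'I_n) : 0 < x a.
Proof. by case: flag => x01 _ _ _ _; case/andP: (x01 a). Qed.

Lemma x_lt1 (a : 'I_n) : x a < 1.
Proof. by case: flag => x01 _ _ _ _; case/andP: (x01 a). Qed.

Lemma frac_x (a : 'I_n) : frac (x a) = x a.
Proof. by rewrite frac_id // ltW ?x_gt0 ?x_lt1. Qed.

Lemma frac_1x (a : 'I_n) : frac (1 + x a) = x a.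
Proof. by rewrite frac1D frac_x. Qed.

Lemma edge_head {a b : 'I_n} : (a < b)%N -> c a b (x b) = y b.
Proof. by case: flag => _ _ edge _ _ /edge[]. Qed.

Lemma edge_tail {a b : 'I_n} : (a < b)%N -> c a b (1 + x a) = y a.
Proof. by case: flag => _ _ edge _ _ /edge[]. Qed.

Lemma edge_continuous {a b : 'I_n} : (a < b)%N ->
  {within [set t | edom x a b t], continuous (c a b)}.
Proof. by case: flag => _ _ edge _ _ /edge[]. Qed.

Lemma meet_unique {a b a' b' : 'I_n} {s t s' t' : R} :
  (a < b)%N -> (a' < b')%N -> (a, b) <> (a', b') ->
  meet_at x c a b a' b' s t -> meet_at x c a b a' b' s' t' -> s = s'.
Proof.
move=> ab ab' neq m m'.
have fss' : frac s = frac s'.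
  by case: flag => _ _ _ _ /(_ _ _ _ _ ab ab' neq) [/(_ _ _ _ _ m m') []].
case: m m' => /andP[? ?] _ _ _ [/andP[? ?] _ _ _].
have := x_gt0 a; have := x_lt1 b; have := x_incr _ _ ab => ? ? ?.
have [ss'|s's] := leP s s'; [apply: frac_inj | apply/esym/frac_inj];
  rewrite ?fss' //; lra.
Qed.

(* Parameters [h] and [d + h] lie on the same vertical line; [d = 1] pairs the
   part of the first edge before it wraps around [l_{x=0}] with the part of the
   second edge after it. *)
Lemma edges_meet {a b a' b' : 'I_n} {d u v : R} :
  (a < b)%N -> (a' < b')%N -> d = 0 \/ d = 1 -> u <= v ->
  x b <= u -> v <= 1 + x a -> x b' <= d + u -> d + v <= 1 + x a' ->
  (c a b u - c a' b' (d + u)) * (c a b v - c a' b' (d + v)) <= 0 ->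
  exists2 z, u <= z <= v & meet_at x c a b a' b' z (d + z).
Proof.
move=> ab ab' d01 uv bu va bu' va' sign.
pose G h := c a b h - c a' b' (d + h).
have in_dom h : u <= h <= v -> edom x a b h /\ edom x a' b' (d + h).
  by rewrite /edom; split; lra.
have cG : {within `[u, v], continuous G}.
  apply: (@within_continuousB _ _ _ _ (c a b) (fun h => c a' b' (d + h))).
    have sub : `[u, v] `<=` [set t | edom x a b t].
      by move=> h /=; rewrite in_itv /= => /in_dom[].
    exact: continuous_subspaceW sub (edge_continuous ab).
  apply: (continuous_within_shift (edge_continuous ab')) => h /=.
  by rewrite in_itv /= => /in_dom[].
have [z zuv /eqP] := IVT_mul_le0 uv cG sign.
rewrite subr_eq0 => /eqP Gz; exists z => //.
have [dom dom'] := in_dom z zuv.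
by split => //; case: d01 {G cG sign bu' va' in_dom dom' Gz} => ->;
  rewrite ?add0r ?frac1D.
Qed.

Lemma meeting_in_sign_change {a b a' b' : 'I_n} {d u v s t : R} :
  (a < b)%N -> (a' < b')%N -> (a, b) <> (a', b') -> d = 0 \/ d = 1 -> u <= v ->
  x b <= u -> v <= 1 + x a -> x b' <= d + u -> d + v <= 1 + x a' ->
  (c a b u - c a' b' (d + u)) * (c a b v - c a' b' (d + v)) <= 0 ->
  meet_at x c a b a' b' s t -> u <= s <= v.
Proof.
move=> ab ab' neq d01 uv bu va bu' va' sign m.
have [z zuv mz] := edges_meet ab ab' d01 uv bu va bu' va' sign.
by rewrite -(meet_unique ab ab' neq mz m).
Qed.

(* [v_iv_j] and [v_jv_r] already meet at [v_j], so they cannot cross right of [v_r]. *)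
Lemma adjacent_edges_side {i j r : 'I_n} {w : R} : (i < j)%N -> (j < r)%N ->
  x r <= w < 1 -> 0 < (c i j w - c j r w) * (c i j (x r) - y r).
Proof.
move=> ij jr rw; rewrite ltNge; apply/negP => sign.
have := x_incr _ _ ij; have := x_incr _ _ jr; have := x_gt0 i; have := x_lt1 r.
move=> ? ? ? ?.
have meet_j : meet_at x c i j j r (x j) (1 + x j).
  split; rewrite /edom ?edge_head ?edge_tail ?frac1D //; lra.
have ijjr : (i, j) <> (j, r) by case=> ji; rewrite ji ltnn in ij.
have : x r <= x j <= w.
  apply: (meeting_in_sign_change ij jr ijjr (or_introl erefl) _ _ _ _ _ _ meet_j);
    rewrite ?add0r ?edge_head //; lra.
lra.
Qed.

Lemma x_neq {a b : 'I_n} : a != b -> x a != x b.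
Proof.
move=> ab; have [/x_incr/lt_eqF ->|/x_incr/gt_eqF ->|/val_inj eab] // := ltngtP a b.
by rewrite eab eqxx in ab.
Qed.

Section Separation.
Variables i j k l : 'I_n.
Hypotheses (ij : (i < j)%N) (jk : (j < k)%N) (kl : (k < l)%N).

Let x_chain : [/\ 0 < x i, x i < x j, x j < x k, x k < x l & x l < 1].
Proof. by split; rewrite ?x_gt0 ?x_lt1 ?x_incr. Qed.

Let ij_neq_kl : (i, j) <> (k, l).
Proof. by case=> ik; move: (ltn_trans ij jk); rewrite ik ltnn. Qed.

Lemma kl_above_j_of_meet {X : R} : c i j (x k) < y k ->
  x l <= X < 1 -> c k l X = c i j X -> y j < c k l (1 + x j).
Proof.
move=> k_above lX meet; rewrite ltNge; apply/negP => j_above.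
have [? ? ? ? ?] := x_chain.
have meetX : meet_at x c i j k l X X by split; rewrite /edom //; lra.
have : x j <= X <= x k.
  apply: (meeting_in_sign_change ij kl ij_neq_kl (or_intror erefl)
    _ _ _ _ _ _ meetX); try lra.
  by rewrite edge_head ?edge_tail //; apply: mulr_ge0_le0;
    rewrite ?subr_ge0 ?subr_le0 // ltW.
lra.
Qed.

Lemma kl_above_jl {X : R} : y j < c k l (1 + x j) -> x l < X < 1 ->
  c j l X < c k l X.
Proof.
move=> j_below lX; rewrite ltNge; apply/negP => jl_above.
have [? ? ? ? ?] := x_chain.
have jl := ltn_trans jk kl.
have meet_l : meet_at x c j l k l (x l) (x l).
  by split; rewrite /edom ?edge_head //; lra.
have jl_neq_kl : (j, l) <> (k, l) by case=> jk_eq; move: jk; rewrite jk_eq ltnn.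
have : X <= x l <= 1 + x j.
  apply: (meeting_in_sign_change jl kl jl_neq_kl (or_introl erefl)
    _ _ _ _ _ _ meet_l); try lra.
  by rewrite !add0r edge_tail //; apply: mulr_ge0_le0; lra.
lra.
Qed.

Lemma no_meet_beyond_l {X : R} : c i j (x k) < y k -> c i j (x l) < y l ->
  x l <= X < 1 -> c k l X <> c i j X.
Proof.
move=> k_above l_above lX meet; have [? ? ? ? ?] := x_chain.
have lX_neq : x l != X.
  by apply/eqP => lX_eq; move: meet; rewrite -lX_eq edge_head //; lra.
have lX' : x l < X < 1 by move: lX; rewrite [x l < X]lt_neqAle lX_neq.
have kl_jl := kl_above_jl (kl_above_j_of_meet k_above lX meet) lX'.
have jl_ij : c i j X < c j l X.
  have := adjacent_edges_side ij (ltn_trans jk kl) lX.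
  by rewrite nmulr_lgt0 ?subr_lt0.
lra.
Qed.

Lemma kl_above_vertex_right (r : 'I_n) : c i j (x k) < y k -> c i j (x l) < y l ->
  x l < x r -> y r < c i j (x r) -> y r < c k l (x r).
Proof.
move=> k_above l_above lr r_below; rewrite ltNge; apply/negP => kl_below.
have [? ? ? ? ?] := x_chain; have := x_lt1 r => ?.
have [||||||z zlr] := edges_meet (u := x l) (v := x r) kl ij (or_introl erefl);
  try lra.
  by rewrite !add0r edge_head //; apply: mulr_ge0_le0; lra.
case=> _ _ _; rewrite add0r; apply: no_meet_beyond_l => //; lra.
Qed.

Lemma kl_below_j {r : 'I_n} : c i j (x k) < y k ->
  x j < x r -> x r < x k -> c k l (1 + x r) < c i j (x r) ->
  c k l (1 + x j) < y j.
Proof.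
move=> k_above jr rk r_cross; rewrite ltNge; apply/negP => j_below.
have [? ? ? ? ?] := x_chain.
have [||||||h hrk meet_h] := edges_meet (u := x r) (v := x k) ij kl
  (or_intror erefl); try lra.
  by rewrite edge_tail //; apply: mulr_ge0_le0;
    rewrite ?subr_ge0 ?subr_le0 // ltW.
have : x j <= h <= x r.
  apply: (meeting_in_sign_change ij kl ij_neq_kl (or_intror erefl)
    _ _ _ _ _ _ meet_h); try lra.
  by rewrite edge_head //; apply: mulr_le0_ge0;
    rewrite ?subr_ge0 ?subr_le0 // ltW.
move=> hjr; have hr : h = x r by lra.
by case: meet_h => _ _ _; rewrite hr => e; move: r_cross; rewrite e ltxx.
Qed.

Lemma kl_above_vertex_left (r : 'I_n) : c i j (x k) < y k -> c i j (x l) < y l ->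
  (j < r)%N -> x r < x k -> y r < c i j (x r) -> y r < c k l (1 + x r).
Proof.
move=> k_above l_above jr rk r_below; rewrite ltNge; apply/negP => kl_below.
have [? ? ? ? ?] := x_chain; have := x_lt1 r; have := x_incr _ _ jr => ? ?.
have j_above := kl_below_j k_above (x_incr _ _ jr) rk
  (le_lt_trans kl_below r_below).
have jr_k : c j r (x k) < c i j (x k).
  have := adjacent_edges_side ij jr (w := x k) ltac:(lra).
  by rewrite pmulr_lgt0 ?subr_gt0.
have jr_l : c j r (x l) < c i j (x l).
  have := adjacent_edges_side ij jr (w := x l) ltac:(lra).
  by rewrite pmulr_lgt0 ?subr_gt0.
have [||||||h hrk meet_h] := edges_meet (u := x r) (v := x k) jr kl
  (or_intror erefl); try lra.
  by rewrite edge_head ?edge_tail //; apply: mulr_ge0_le0;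
    rewrite ?subr_ge0 ?subr_le0 //; lra.
have jr_neq_kl : (j, r) <> (k, l) by case=> jk_eq; move: jk; rewrite jk_eq ltnn.
have : x l <= h <= 1 + x j.
  apply: (meeting_in_sign_change jr kl jr_neq_kl (or_introl erefl)
    _ _ _ _ _ _ meet_h); try lra.
  by rewrite !add0r edge_head ?edge_tail //; apply: mulr_le0_ge0; lra.
lra.
Qed.

Lemma vertex_below_kl (r : 'I_n) : c i j (x k) < y k -> c i j (x l) < y l ->
  (j < r)%N -> r != k -> r != l -> y r < c i j (x r) -> vertex_below x y c r k l.
Proof.
move=> k_above l_above jr rk rl r_below t dt ft.
have [? ? ? ? ?] := x_chain; have := x_gt0 r; have := x_lt1 r => ? ?.
have t02 : 0 < t < 2 by move: dt; rewrite /edom; lra.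
have [[_ frac_t]|[_ frac_t]] := frac_lt2 t02; rewrite frac_t in ft.
  rewrite ft; apply: kl_above_vertex_right => //.
  by rewrite lt_def (x_neq rl) /=; move: dt; rewrite /edom; lra.
have -> : t = 1 + x r by lra.
apply: kl_above_vertex_left => //.
by rewrite lt_def eq_sym (x_neq rk) /=; move: dt; rewrite /edom; lra.
Qed.

End Separation.

Lemma disjoint_edges_cross {a b a' b' : 'I_n} {s t : R} :
  (a < b)%N -> (a' < b')%N -> a != a' -> a != b' -> b != a' -> b != b' ->
  meet_at x c a b a' b' s t ->
  exists2 d, 0 < d & forall e, 0 < e < d ->
    (c a b (s - e) - c a' b' (t - e)) * (c a b (s + e) - c a' b' (t + e)) < 0.
Proof.
move=> ab ab' aa' ab'_ ba' bb' meet.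
have neq : (a, b) <> (a', b') by case=> /eqP; rewrite (negbTE aa').
case: flag => _ _ _ _ /(_ _ _ _ _ ab ab' neq) [_ /(_ _ _ meet)].
case=> [[m [[]-> []/eqP]]|[_ _ _ _ //]].
- by rewrite (negbTE aa').
- by rewrite (negbTE ab'_).
- by rewrite (negbTE ba').
- by rewrite (negbTE bb').
Qed.

Lemma common_window {a b a' b' : 'I_n} {s t : R} :
  edom x a b s -> edom x a' b' t -> frac s = frac t ->
  exists e1 e2, [/\ 0 <= e1, 0 <= e2,
    forall h, -e1 <= h <= e2 ->
      [/\ edom x a b (s + h), edom x a' b' (t + h) & frac (s + h) = frac (t + h)],
    s - e1 = x b \/ t - e1 = x b' &
    s + e2 = 1 + x a \/ t + e2 = 1 + x a'].
Proof.
rewrite /edom => ds dt fst.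
have := x_gt0 b; have := x_gt0 b'; have := x_lt1 a; have := x_lt1 a' => ? ? ? ?.
have [e1 [e1s e1t e1_eq]] : exists e1, [/\ e1 <= s - x b, e1 <= t - x b' &
    s - e1 = x b \/ t - e1 = x b'].
  have [?|?] := leP (s - x b) (t - x b');
    [exists (s - x b) | exists (t - x b')]; split; lra.
have [e2 [e2s e2t e2_eq]] : exists e2, [/\ e2 <= 1 + x a - s,
    e2 <= 1 + x a' - t & s + e2 = 1 + x a \/ t + e2 = 1 + x a'].
  have [?|?] := leP (1 + x a - s) (1 + x a' - t);
    [exists (1 + x a - s) | exists (1 + x a' - t)]; split; lra.
exists e1, e2; split => //; try lra.
by move=> h hw; split; try lra; apply: eq_fracD => //; lra.
Qed.

Lemma exists_common_line {a b a' b' : 'I_n} : (a < b)%N -> (a' < b')%N ->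
  exists s t, common_line x a b a' b' s t.
Proof.
move=> ab ab'; have := x_incr _ _ ab; have := x_incr _ _ ab'.
have := x_gt0 a; have := x_gt0 a'; have := x_lt1 b; have := x_lt1 b' => ? ? ? ? ? ?.
have [?|?] := leP (x b) (x b');
  [exists ((1 + x b') / 2), ((1 + x b') / 2) | exists ((1 + x b) / 2), ((1 + x b) / 2)];
  by split; rewrite /eint; lra.
Qed.

Section DisjointEdges.
Variables p q k l : 'I_n.
Hypotheses (pq : (p < q)%N) (kl : (k < l)%N).
Hypotheses (pk : p != k) (pl : p != l) (qk : q != k) (ql : q != l).
Hypotheses (p_below : vertex_below x y c p k l) (q_below : vertex_below x y c q k l).
Hypotheses (k_above : vertex_above x y c k p q) (l_above : vertex_above x y c l p q).

Lemma below_at_endpoint (s t : R) : edom x p q s -> edom x k l t ->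
  frac s = frac t -> [\/ s = x q, s = 1 + x p, t = x l | t = 1 + x k] ->
  c p q s < c k l t.
Proof.
move=> ds dt fst [] e; rewrite e in ds dt fst *.
- by rewrite edge_head //; apply: q_below; rewrite // -fst frac_x.
- by rewrite edge_tail //; apply: p_below; rewrite // -fst frac_1x.
- by rewrite edge_head //; apply: l_above; rewrite // fst frac_x.
- by rewrite edge_tail //; apply: k_above; rewrite // fst frac_1x.
Qed.

(* On the common window both edges are graphs over the same x-range, so their
   difference is continuous there, negative at both ends, vanishes at most once
   (simplicity) and changes sign at each zero (proper crossing). *)
Lemma edge_below_edge (s t : R) : edom x p q s -> edom x k l t ->
  frac s = frac t -> c p q s < c k l t.
Proof.
move=> ds dt fst.
have [e1 [e2 [e1_ge0 e2_ge0 window left right]]] := common_window ds dt fst.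
pose G h := c p q (s + h) - c k l (t + h).
have meet h : -e1 <= h <= e2 -> G h = 0 -> meet_at x c p q k l (s + h) (t + h).
  move=> hw /eqP; rewrite subr_eq0 => /eqP Gh.
  by have [? ? ?] := window h hw; split.
have G_end h : -e1 <= h <= e2 ->
    [\/ s + h = x q, s + h = 1 + x p, t + h = x l | t + h = 1 + x k] -> G h < 0.
  move=> hw e; have [? ? ?] := window h hw.
  by rewrite /G subr_lt0; apply: below_at_endpoint.
have cG : {within `[-e1, e2], continuous G}.
  apply: (@within_continuousB _ _ _ _ (fun h => c p q (s + h))
    (fun h => c k l (t + h))).
    apply: continuous_within_shift (edge_continuous pq) _.
    by move=> h /=; rewrite in_itv /= => /window[].
  apply: continuous_within_shift (edge_continuous kl) _.
  by move=> h /=; rewrite in_itv /= => /window[].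
have G_left : G (- e1) < 0.
  by apply: G_end; [lra | case: left => e; [constructor 1 | constructor 3]; lra].
have G_right : G e2 < 0.
  by apply: G_end; [lra | case: right => e; [constructor 2 | constructor 4]; lra].
have G_uniq u v : -e1 <= u <= e2 -> -e1 <= v <= e2 -> G u = 0 -> G v = 0 -> u = v.
  move=> uw vw Gu Gv.
  have pqkl : (p, q) <> (k, l) by case=> /eqP; rewrite (negbTE pk).
  by have := meet_unique pq kl pqkl (meet u uw Gu) (meet v vw Gv); lra.
have G_cross z : -e1 < z < e2 -> G z = 0 ->
    exists2 d, 0 < d & forall e, 0 < e < d -> G (z - e) * G (z + e) < 0.
  move=> zw Gz.
  have [d d0 cross] := disjoint_edges_cross pq kl pk pl qk ql (meet z ltac:(lra) Gz).
  by exists d => // e /cross; rewrite /G !addrA.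
have := lt0_of_single_crossing cG G_left G_right G_uniq G_cross 0 ltac:(lra).
by rewrite /G !addr0 subr_lt0.
Qed.

End DisjointEdges.

Lemma eint_edom {a b : 'I_n} {t : R} : eint x a b t -> edom x a b t.
Proof. by move=> /andP[? ?]; apply/andP; split; apply: ltW. Qed.

Lemma eint_frac_vertex {i j r : 'I_n} {t : R} : (i < j)%N -> (j < r)%N ->
  eint x i j t -> frac t = x r -> t = x r.
Proof.
move=> ij jr /andP[jt ti]; have := x_incr _ _ ij; have := x_incr _ _ jr.
have := x_gt0 i; have := x_lt1 r => ? ? ? ?.
have t02 : 0 < t < 2 by lra.
by have [[_ ->]|[_ ->]] := frac_lt2 t02; lra.
Qed.

Lemma Vplus_above {i j r : 'I_n} : (i < j)%N -> r \in Vplus x y c i j ->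
  (j < r)%N /\ c i j (x r) < y r.
Proof.
move=> ij; rewrite inE => /andP[jr /asboolP[t [dt ft ct]]].
by rewrite -(eint_frac_vertex ij jr dt ft).
Qed.

Lemma Vminus_below {i j r : 'I_n} : (i < j)%N -> r \in Vminus x y c i j ->
  (j < r)%N /\ y r < c i j (x r).
Proof.
move=> ij; rewrite inE => /andP[jr /asboolP[t [dt ft ct]]].
by rewrite -(eint_frac_vertex ij jr dt ft).
Qed.

End Flag.

Lemma flag_opp {R : realType} {n : nat} {x y : 'I_n -> R}
    {c : 'I_n -> 'I_n -> R -> R} :
  is_flag x y c -> is_flag x (fun a => - y a) (fun a b t => - c a b t).
Proof.
case=> x01 x_inj edge avoid simple; split => //.
- move=> a b ab; have [cont head tail] := edge _ _ ab.
  by split; [move=> t; apply/continuousN/cont | rewrite head | rewrite tail].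
- by move=> a b r ab ra rb t dt ft /oppr_inj; exact: avoid.
move=> a b a' b' ab ab' neq; have [uniq cross] := simple _ _ _ _ ab ab' neq.
have meetN s t : meet_at x (fun a b t => - c a b t) a b a' b' s t ->
    meet_at x c a b a' b' s t.
  by case=> ds dt fst /oppr_inj cst.
split=> [s t s' t' /meetN m /meetN m'|s t /meetN m].
  by have [-> ->] := uniq _ _ _ _ m m'.
case: (cross _ _ m) => [[r [ra rb fr cr]]|[ds dt fst cst [d d0 sign]]].
  by left; exists r; rewrite cr.
right; split; rewrite ?cst //; exists d => // e /sign.
by rewrite -!opprD mulrNN.
Qed.

Lemma vertex_above_opp {R : realType} {n : nat} {x y : 'I_n -> R}
    {c : 'I_n -> 'I_n -> R -> R} {r a b : 'I_n} :
  vertex_below x (fun a => - y a) (fun a b t => - c a b t) r a b ->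
  vertex_above x y c r a b.
Proof. by move=> below t dt ft; rewrite -ltrN2; exact: below. Qed.

Theorem claim14 (R : realType) (n : nat) (x y : 'I_n -> R)
    (c : 'I_n -> 'I_n -> R -> R) (i j : 'I_n) :
  (forall a b : 'I_n, (a < b)%N -> x a < x b) ->
  is_flag x y c ->
  (i < j)%N ->
  separating x y c i j ->
  forall k l p q : 'I_n,
    (k < l)%N -> k \in Vplus x y c i j -> l \in Vplus x y c i j ->
    (p < q)%N -> p \in Vminus x y c i j -> q \in Vminus x y c i j ->
    (forall s t, ~ meet_at x c k l p q s t) /\
    related x c p q k l /\ prec x c p q k l.
Proof.
move=> x_incr flag ij _ k l p q kl k_in l_in pq p_in q_in.
have [jk k_above] := Vplus_above x_incr flag ij k_in.
have [jl l_above] := Vplus_above x_incr flag ij l_in.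
have [jp p_below] := Vminus_below x_incr flag ij p_in.
have [jq q_below] := Vminus_below x_incr flag ij q_in.
have neq a b : c i j (x a) < y a -> y b < c i j (x b) -> b != a.
  by move=> a_above b_below; apply/eqP => ba; move: a_above; rewrite -ba; lra.
have below_kl r : r \in [:: p; q] -> vertex_below x y c r k l.
  by rewrite !inE => /orP[]/eqP->;
    apply: (vertex_below_kl x_incr flag _ _ _ _ ij jk kl) => //; rewrite neq.
have above_pq r : r \in [:: k; l] -> vertex_above x y c r p q.
  by rewrite !inE => /orP[]/eqP->; apply: vertex_above_opp;
    apply: (vertex_below_kl x_incr (flag_opp flag) _ _ _ _ ij jp pq) => //=;
    try lra; rewrite eq_sym neq.
have below s t : edom x p q s -> edom x k l t -> frac s = frac t ->
    c p q s < c k l t.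
  apply: (edge_below_edge x_incr flag) => //;
    first [by rewrite neq | apply: below_kl | apply: above_pq];
    by rewrite !inE eqxx ?orbT.
split.
  by move=> s t [ds dt fst cst]; have := below t s dt ds (esym fst); lra.
have prec_pq_kl : prec x c p q k l.
  by move=> s t [ds dt fst]; apply/ltW/below => //; exact: eint_edom.
split=> //; split=> //.
- move=> [s [t [ds dt fst cst _]]].
  by have := below s t (eint_edom ds) (eint_edom dt) fst; lra.
- exact: (exists_common_line x_incr flag pq kl).
- by left.
Qed.
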